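(* Let $(X,Y,Z)$ be a random vector where $Y$ takes values in a countable set $\mathcal Y$ with $\mathbb P(Y\in\mathcal Y)=1$. Then $$0\le \mathrm{ETV}(X,Y,Z)\le 1 .$$ Moreover, when $\mathcal Y$ is finite, the upper bound $\mathrm{ETV}(X,Y,Z)=1$ is achieved when, conditional on $Z$, $X$ deterministically determines $Y$ (i.e. $Y$ is a measurable function of $(X,Z)$) and $\mathbb P(Y=y\mid Z)=1/|\mathcal Y|$ almost surely for all $y\in\mathcal Y$.
   Context: For distributions $\mathcal L_1,\mathcal L_2$ on the same space, $\mathrm{TV}(\mathcal L_1,\mathcal L_2)=\sup_A|\mathcal L_1(A)-\mathcal L_2(A)|$ (half the $L_1$ distance between densities/mass functions). The expected total variation is $$\mathrm{ETV}(X,Y,Z)=\frac{1}{1-1/|\mathcal Y|}\,\mathbb E\big[\mathrm{TV}\big(\mathcal L(Y\mid X,Z),\mathcal L(Y\mid Z)\big)\big],$$ where $|\mathcal Y|$ is the support size of $Y$; if $|\mathcal Y|=\infty$ the normalizing factor $\frac{1}{1-1/|\mathcal Y|}$ is replaced by $1$. Here $\mathcal L(\cdot\mid\cdot)$ denotes conditional distribution. *)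

From HB Require Import structures.
From mathcomp Require Import all_boot all_order all_algebra.
From mathcomp Require Import finmap.
From mathcomp Require Import all_classical all_reals all_analysis.
Set Implicit Arguments. Unset Strict Implicit. Unset Printing Implicit Defensive.
Import Order.TTheory GRing.Theory Num.Theory.
Local Open Scope classical_set_scope.
Local Open Scope ring_scope.

Section ETVDefs.
Context {R : realType} {d : measure_display} {Omega : measurableType d}.

Definition is_pmf (p : nat -> R) : Prop :=
  (forall y, 0 <= p y) /\ (\sum_(0 <= y <oo) (p y)%:E = 1)%E.

(* q is (a version of) the conditional distribution (pmf) of Y given W:
   a regular conditional pmf, measurable in the conditioning variable, such that
   P(Y = y, W in A) = E[ q(W)(y) ; W in A ] for every measurable A. *)
Definition cond_pmf {dW : measure_display} {TW : measurableType dW}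
  (P : probability Omega R) (Y : Omega -> nat) (W : Omega -> TW)
  (q : TW -> nat -> R) : Prop :=
  (forall t, is_pmf (q t)) /\
  (forall y, measurable_fun setT (fun t => q t y)) /\
  (forall y (A : set TW), measurable A ->
     (P ([set w | Y w = y] `&` (W @^-1` A)) =
      \int[P]_(w in W @^-1` A) (q (W w) y)%:E)%E).

Definition tv (p q : nat -> R) : \bar R :=
  ((2 : R)^-1)%:E * (\sum_(0 <= y <oo) (`|p y - q y|)%:E)%E.

Definition supp (P : probability Omega R) (Y : Omega -> nat) : set nat :=
  [set y | (0 < P [set w | Y w = y])%E].

Definition etv_factor (S : set nat) : R :=
  if pselect (finite_set S) then (1 - (#|` fset_set S |%fset%:R)^-1)^-1 else 1.

(* ETV(X,Y,Z), given versions f of L(Y | X,Z) and g of L(Y | Z) *)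
Definition ETV {dX dZ : measure_display} {TX : measurableType dX}
  {TZ : measurableType dZ} (P : probability Omega R)
  (X : Omega -> TX) (Y : Omega -> nat) (Z : Omega -> TZ)
  (f : TX * TZ -> nat -> R) (g : TZ -> nat -> R) : \bar R :=
  ((etv_factor (supp P Y))%:E * \int[P]_w tv (f (X w, Z w)) (g (Z w)))%E.

End ETVDefs.

(* ETV >= 0 is clear, and ETV <= 1 says E[TV] <= 1 - 1/n when Y charges n
   points. For pmfs p and q, TV(p, q) <= 1 - sum_y p_y q_y. With
   p = L(Y | X,Z) and q = L(Y | Z), the tower property turns E[p_y q_y] into
   E[q_y^2] >= 2 P(Y = y)/n - 1/n^2 (expand (q_y - 1/n)^2 >= 0), and summing
   over the n points gives E[TV] <= 1 - 1/n. In the extremal case p is the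
   point mass at Y and q is uniform, and testing TV against the functions
   2 1{Y = y} - 1 gives the matching lower bound. *)

From HB Require Import structures.
From mathcomp Require Import all_boot all_order all_algebra.
From mathcomp Require Import finmap.
From mathcomp Require Import all_classical all_reals all_analysis.
From mathcomp Require Import measurable_realfun ring lra.
Set Implicit Arguments. Unset Strict Implicit. Unset Printing Implicit Defensive.
Import Order.TTheory GRing.Theory Num.Theory.
Local Open Scope classical_set_scope.
Local Open Scope ring_scope.

Lemma normrB_add_mul_le {R : realDomainType} (a b : R) :
  0 <= a <= 1 -> 0 <= b <= 1 -> `|a - b| + 2 * (a * b) <= a + b.
Proof.
case/andP=> a0 a1 /andP[b0 b1]; rewrite -lerBrDr ler_norml.
by apply/andP; split; nra.
Qed.

Section pmf.
Context {R : realType}.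
Implicit Types (p q c : nat -> R) (F : {fset nat}).
Local Open Scope ereal_scope.

Lemma pmf_le1 p y : is_pmf p -> (p y <= 1)%R.
Proof.
case=> p0 p1; rewrite -lee_fin -p1.
apply: le_trans (lee_sum_fset_lim [fset y]%fset xpredT _); first by rewrite big_seq_fset1.
by move=> i _; rewrite lee_fin.
Qed.

Lemma tv_ge0 p q : 0 <= tv p q.
Proof. by rewrite mule_ge0 ?lee_fin// nneseries_ge0// => y _ _; rewrite lee_fin. Qed.

Lemma tv_le_1_sub_overlap p q F : is_pmf p -> is_pmf q ->
  tv p q <= (1 - \sum_(y <- F) p y * q y)%:E.
Proof.
move=> hp hq; pose m y := (2 * (p y * q y) * (y \in F)%:R)%R.
have p01 y : (0 <= p y <= 1)%R by rewrite hp.1 pmf_le1.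
have q01 y : (0 <= q y <= 1)%R by rewrite hq.1 pmf_le1.
have m_ge0 y : (0 <= m y)%R by rewrite !mulr_ge0 ?hp.1 ?hq.1.
have m_le y : (`|p y - q y| + m y <= p y + q y)%R.
  apply: le_trans (normrB_add_mul_le (p01 y) (q01 y)).
  by rewrite lerD2l /m; case: (y \in F); rewrite ?mulr1// mulr0 !mulr_ge0 ?hp.1 ?hq.1.
have sum_m : (2 * \sum_(y <- F) p y * q y)%:E <= \sum_(0 <= y <oo) (m y)%:E.
  rewrite mulr_sumr -sumEFin big_seq (eq_bigr (fun y => (m y)%:E)); last first.
    by move=> y yF; rewrite /m yF mulr1.
  by rewrite -big_seq; apply: (lee_sum_fset_lim F xpredT) => y _; rewrite lee_fin.
have series_le2 : \sum_(0 <= y <oo) (`|p y - q y|)%:E +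
    (2 * \sum_(y <- F) p y * q y)%:E <= 2%:E.
  apply: le_trans (leeD2l _ sum_m) _; rewrite -nneseriesD; last 2 first.
  - by move=> y _ _; rewrite lee_fin.
  - by move=> y _ _; rewrite lee_fin.
  apply: (@le_trans _ _ (\sum_(0 <= y <oo) ((p y)%:E + (q y)%:E))).
    apply: lee_nneseries => y *; first by rewrite adde_ge0 ?lee_fin.
    by rewrite -!EFinD lee_fin.
  rewrite nneseriesD; first by rewrite hp.2 hq.2.
  - by move=> y _ _; rewrite lee_fin hp.1.
  - by move=> y _ _; rewrite lee_fin hq.1.
rewrite -leeBrDr// -EFinB in series_le2.
rewrite /tv; apply: le_trans (lee_wpmul2l _ series_le2) _; first by rewrite lee_fin.
by rewrite -EFinM lee_fin; lra.
Qed.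

Lemma tv_ge_test_fun p q c F : (forall y, `|c y| <= 1)%R ->
  (2^-1 * \sum_(y <- F) (p y - q y) * c y)%:E <= tv p q.
Proof.
move=> c1; rewrite /tv EFinM lee_wpmul2l ?lee_fin//.
apply: (@le_trans _ _ (\sum_(y <- F) (`|p y - q y|)%:E)).
  rewrite sumEFin lee_fin ler_sum// => y _.
  by rewrite (le_trans (ler_norm _))// normrM ler_piMr.
by apply: (lee_sum_fset_lim F xpredT) => i _; rewrite lee_fin.
Qed.

Lemma etv_factor_ge0 (S : set nat) : (0 <= @etv_factor R S)%R.
Proof.
rewrite /etv_factor; destruct pselect => //.
rewrite invr_ge0 subr_ge0; move: #|` _ |%fset => [|n].
  by rewrite invr0.
by rewrite invf_le1 ?ler1n ?ltr0n.
Qed.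

Lemma etv_factor_finite (S : set nat) : finite_set S ->
  @etv_factor R S = ((1 - (#|` fset_set S |%fset%:R)^-1)^-1)%R.
Proof. by rewrite /etv_factor; destruct pselect. Qed.

End pmf.

Section expectation.
Context {R : realType} {d : measure_display} {Omega : measurableType d}.
Variable P : probability Omega R.
Implicit Types (F G : Omega -> R) (A : set Omega).

Lemma measurable_tv (p q : Omega -> nat -> R) :
  (forall y, measurable_fun setT (p ^~ y)) -> (forall y, measurable_fun setT (q ^~ y)) ->
  measurable_fun setT (fun w => tv (p w) (q w)).
Proof.
move=> mp mq; apply: measurable_funeM.
apply: (@ge0_emeasurable_sum _ _ R setT (fun y w => (`|p w y - q w y|)%:E) xpredT).
  by move=> y w _ _; rewrite lee_fin.
by move=> y _; apply/measurable_EFinP/measurableT_comp/measurable_funB.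
Qed.

Definition bounded_mfun F :=
  measurable_fun setT F /\ exists M, forall w, `|F w| <= M.

Lemma bounded_mfun_cst c : bounded_mfun (fun=> c).
Proof. by split; [exact: measurable_cst | exists `|c|]. Qed.

Lemma bounded_mfun_indic A : measurable A -> bounded_mfun (\1_A).
Proof.
move=> mA; split; first exact: measurable_indic.
by exists 1 => w; rewrite indicE; case: (_ \in _); rewrite ?normr0 ?normr1.
Qed.

Lemma bounded_mfunD F G : bounded_mfun F -> bounded_mfun G ->
  bounded_mfun (fun w => F w + G w).
Proof.
move=> [mF [M hM]] [mG [N hN]]; split; first exact: measurable_funD.
by exists (M + N) => w; rewrite (le_trans (ler_normD _ _))// lerD.
Qed.

Lemma bounded_mfunN F : bounded_mfun F -> bounded_mfun (fun w => - F w).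
Proof.
move=> [mF [M hM]]; split; first exact: measurableT_comp.
by exists M => w; rewrite normrN.
Qed.

Lemma bounded_mfunB F G : bounded_mfun F -> bounded_mfun G ->
  bounded_mfun (fun w => F w - G w).
Proof. by move=> bF bG; apply: bounded_mfunD => //; exact: bounded_mfunN. Qed.

Lemma bounded_mfunM F G : bounded_mfun F -> bounded_mfun G ->
  bounded_mfun (fun w => F w * G w).
Proof.
move=> [mF [M hM]] [mG [N hN]]; split; first exact: measurable_funM.
by exists (M * N) => w; rewrite normrM ler_pM.
Qed.

Lemma bounded_mfun_sum (I : Type) (s : seq I) (F : I -> Omega -> R) :
  (forall i, bounded_mfun (F i)) -> bounded_mfun (fun w => \sum_(i <- s) F i w).
Proof.
move=> bF; elim: s => [|i s ih].
  by under eq_fun do rewrite big_nil; exact: bounded_mfun_cst.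
by under eq_fun do rewrite big_cons; exact: bounded_mfunD.
Qed.

Lemma bounded_mfun_integrable F : bounded_mfun F -> P.-integrable setT (EFin \o F).
Proof.
move=> [mF [M hM]]; apply: measurable_bounded_integrable => //.
  by rewrite (le_lt_trans (probability_le1 P measurableT))// ltry.
rewrite /bounded_near; near=> M' => w _ /=; apply: le_trans (hM w) _.
by near: M'; apply: nbhs_pinfty_ge; exact: num_real.
Unshelve. all: end_near. Qed.

Lemma integral_bounded_mfun F : bounded_mfun F ->
  (\int[P]_w (F w)%:E)%E = (\int[P]_w F w)%:E.
Proof.
move=> bF; rewrite fineK//; apply: integrable_fin_num => //.
exact: bounded_mfun_integrable.
Qed.

Lemma expect_cst c : \int[P]_w c = c.
Proof. by rewrite Rintegral_cst// (_ : fine (P setT) = 1) ?mulr1// probability_setT. Qed.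

Lemma expect_indic A : measurable A -> \int[P]_w \1_A w = fine (P A).
Proof. by move=> mA; rewrite /Rintegral integral_indic// setIT. Qed.

Lemma expect_sum (I : Type) (s : seq I) (F : I -> Omega -> R) :
  (forall i, bounded_mfun (F i)) ->
  \int[P]_w (\sum_(i <- s) F i w) = \sum_(i <- s) \int[P]_w F i w.
Proof.
move=> bF; elim: s => [|i s ih].
  by under eq_Rintegral do rewrite big_nil; rewrite big_nil expect_cst.
under eq_Rintegral do rewrite big_cons; rewrite big_cons -ih RintegralD//.
  exact: bounded_mfun_integrable.
exact/bounded_mfun_integrable/bounded_mfun_sum.
Qed.

Lemma expect_ae_eq F G : bounded_mfun F -> bounded_mfun G ->
  {ae P, forall w, F w = G w} -> \int[P]_w F w = \int[P]_w G w.
Proof.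
move=> [mF _] [mG _] FG; congr fine; apply: ae_eq_integral => //.
- exact/measurable_EFinP.
- exact/measurable_EFinP.
- by apply: filterS FG => w /= ->.
Qed.

Lemma expect_sqr_ge F (a : R) : bounded_mfun F ->
  2 * a * \int[P]_w F w - a ^+ 2 <= \int[P]_w (F w * F w).
Proof.
move=> bF; have iF := bounded_mfun_integrable.
have bF2 : bounded_mfun (fun w => 2 * a * F w).
  exact/bounded_mfunM/bF/bounded_mfun_cst.
have -> : 2 * a * \int[P]_w F w - a ^+ 2 = \int[P]_w (2 * a * F w - a ^+ 2).
  by rewrite RintegralB ?RintegralZl ?expect_cst//;
    apply: iF => //; exact: bounded_mfun_cst.
apply: le_Rintegral => //.
- exact/iF/bounded_mfunB/bounded_mfun_cst.
- exact/iF/bounded_mfunM.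
- by move=> w _; have := sqr_ge0 (F w - a); nra.
Qed.

End expectation.

Section tower.
Context {R : realType} {d dT : measure_display} {Omega : measurableType d}
  {T : measurableType dT} (mu : {measure set Omega -> \bar R}) (W : Omega -> T).
Hypothesis mW : measurable_fun setT W.
Local Open Scope ereal_scope.
Import HBNNSimple.

Lemma integral_nnsfun_comp_mul (s : {nnsfun T >-> R}) (u : Omega -> \bar R) :
  (forall w, 0 <= u w) -> measurable_fun setT u ->
  \int[mu]_w ((s (W w))%:E * u w) =
  \sum_(r \in range s) r%:E * \int[mu]_(w in W @^-1` (s @^-1` [set r])) u w.
Proof.
move=> u0 mu_.
transitivity (\int[mu]_w (\sum_(r \in range s)
    ((r * \1_(s @^-1` [set r]) (W w))%:E * u w))).
  apply: eq_integral => w _.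
  rewrite -ge0_mule_fsuml => [|y]; last exact: nnfun_muleindic_ge0.
  by rewrite fsumEFin // -(fimfunE _ (W w)).
rewrite ge0_integral_fsum//; last 2 first.
  - move=> r; apply: emeasurable_funM => //; apply/measurable_EFinP.
    by apply: measurable_funM => //; apply: measurableT_comp.
  - by move=> m y _; rewrite mule_ge0 ?u0// nnfun_muleindic_ge0.
apply: eq_fsbigr => r rs.
under eq_integral do rewrite EFinM -muleA.
rewrite ge0_integralZl//; last 3 first.
- apply: emeasurable_funM => //; apply/measurable_EFinP.
  by apply: measurableT_comp => //; exact: measurable_indic.
- by move=> w _; rewrite mule_ge0// lee_fin.
- by move: rs; rewrite inE => -[t _ <-]; rewrite lee_fin.
congr (_ * _); rewrite [RHS]integral_mkcond; apply: eq_integral => w _.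
by rewrite epatch_indic /= muleC.
Qed.

(* The tower property: linearity for simple phi, then monotone convergence. *)
Lemma eq_integral_comp_mul (u v : Omega -> R) (phi : T -> R) :
  (forall w, (0 <= u w)%R) -> (forall w, (0 <= v w)%R) ->
  measurable_fun setT u -> measurable_fun setT v ->
  (forall t, (0 <= phi t)%R) -> measurable_fun setT phi ->
  (forall B, measurable B -> \int[mu]_(w in W @^-1` B) (u w)%:E =
                             \int[mu]_(w in W @^-1` B) (v w)%:E) ->
  \int[mu]_w ((phi (W w))%:E * (u w)%:E) = \int[mu]_w ((phi (W w))%:E * (v w)%:E).
Proof.
move=> u0 v0 mu_ mv phi0 mphi uv.
have mphiE : measurable_fun setT (EFin \o phi) by exact/measurable_EFinP.
pose h := nnsfun_approx measurableT mphiE.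
have approx (k : Omega -> R) : (forall w, (0 <= k w)%R) -> measurable_fun setT k ->
    \int[mu]_w ((phi (W w))%:E * (k w)%:E) =
    limn (fun n => \int[mu]_w ((h n (W w))%:E * (k w)%:E)).
  move=> k0 mk.
  transitivity (\int[mu]_w limn (fun n => (h n (W w))%:E * (k w)%:E)).
    apply: eq_integral => w _; apply/esym/cvg_lim => //; apply: cvgeZr => //.
    have := cvg_nnsfun_approx measurableT mphiE.
    by move=> /(_ _ (W w) I); apply => t _; rewrite lee_fin.
  apply: monotone_convergence => //.
  - move=> n; apply: emeasurable_funM; last exact/measurable_EFinP.
    by apply/measurable_EFinP; apply: measurableT_comp.
  - by move=> n w _; rewrite mule_ge0// lee_fin.
  - move=> w _ a b ab; rewrite lee_wpmul2r ?lee_fin//.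
    exact/lefP/nd_nnsfun_approx.
rewrite !approx//; congr (limn _); apply/funext => n.
rewrite !integral_nnsfun_comp_mul//; try exact/measurable_EFinP;
  try by move=> w; rewrite lee_fin.
by apply: eq_fsbigr => r _; rewrite uv.
Qed.

End tower.

Section cond_pmf.
Context {R : realType} {d dW : measure_display} {Omega : measurableType d}
  {TW : measurableType dW} (P : probability Omega R) (Y : Omega -> nat)
  (W : Omega -> TW) (q : TW -> nat -> R).
Hypotheses (mW : measurable_fun setT W) (cq : cond_pmf P Y W q).

Lemma cond_pmf_ge0 t y : 0 <= q t y.
Proof. exact: (cq.1 t).1. Qed.

Lemma cond_pmf_bounded y : bounded_mfun (fun w => q (W w) y).
Proof.
split; first exact: measurableT_comp (cq.2.1 y) mW.
by exists 1 => w; rewrite ger0_norm ?cond_pmf_ge0//; exact: pmf_le1 (cq.1 _).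
Qed.

Lemma integral_cond_pmf y :
  (\int[P]_w (q (W w) y)%:E)%E = P [set w | Y w = y].
Proof. by have := cq.2.2 y setT measurableT; rewrite preimage_setT setIT. Qed.

Lemma expect_cond_pmf y : \int[P]_w q (W w) y = fine (P [set w | Y w = y]).
Proof.
by rewrite -integral_cond_pmf integral_bounded_mfun//; exact: cond_pmf_bounded.
Qed.

Lemma expect_cond_pmf_fiber (h : TW -> nat) y : measurable_fun setT h ->
  (forall w, Y w = h (W w)) ->
  \int[P]_w (q (W w) y * \1_[set w | Y w = y] w) = fine (P [set w | Y w = y]).
Proof.
move=> mh Yh; have fiberE : [set w | Y w = y] = W @^-1` (h @^-1` [set y]).
  by apply/seteqP; split => w /=; rewrite Yh.
have mA : measurable (h @^-1` [set y]) by rewrite -[_ @^-1` _]setTI; exact: mh.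
have := cq.2.2 y _ mA; rewrite -fiberE setIid.
move=> ->; rewrite /Rintegral [in RHS]integral_mkcond; congr fine.
by apply: eq_integral => w _; rewrite epatch_indic EFinM.
Qed.

End cond_pmf.

Section discrete_variable.
Context {R : realType} {d : measure_display} {Omega : measurableType d}
  (P : probability Omega R) (Y : Omega -> nat).
Hypothesis mY : forall y, measurable [set w | Y w = y].
Local Open Scope ereal_scope.

Lemma preimage_fibers (S : set nat) :
  Y @^-1` S = \bigcup_(y in S) [set w | Y w = y].
Proof.
apply/seteqP; split => w /=; first by move=> Sw; exists (Y w).
by case=> y Sy ->.
Qed.

Lemma measurable_discrete_preimage (S : set nat) : measurable (Y @^-1` S).
Proof. by rewrite preimage_fibers; exact: bigcup_measurable. Qed.

Lemma sum_prob_fibers (S : set nat) : finite_set S -> P (Y @^-1` S) = 1 ->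
  (\sum_(y <- fset_set S) fine (P [set w | Y w = y]) = 1)%R.
Proof.
move=> fS PS; apply: EFin_inj; rewrite -sumEFin -PS preimage_fibers.
rewrite measure_fin_bigcup//; last by move=> i j _ _ [w [/= -> ->]].
rewrite fsbig_finite//; apply: eq_bigr => y _.
by rewrite fineK// fin_num_measure.
Qed.

Lemma prob_fiber_outside (S : set nat) y : P (Y @^-1` S) = 1 -> ~ S y ->
  P [set w | Y w = y] = 0.
Proof.
move=> PS nSy; have mS := measurable_discrete_preimage S.
have null : P (~` (Y @^-1` S)) = 0 by rewrite probability_setC// PS subee.
apply/eqP; rewrite eq_le measure_ge0 andbT -null le_measure ?inE//.
- exact: measurableC.
- by move=> w /= ->.
Qed.

Lemma prob_supp : P (Y @^-1` supp P Y) = 1.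
Proof.
have mS := measurable_discrete_preimage (supp P Y).
have null : P (~` (Y @^-1` supp P Y)) = 0.
  apply/negligibleP; first exact: measurableC.
  have -> : ~` (Y @^-1` supp P Y) =
      \bigcup_y [set w | Y w = y /\ ~ supp P Y y].
    by apply/seteqP; split => [w /= nS|w [y _ [/= -> ?]]]; first by exists (Y w).
  apply: negligible_bigcup => y.
  have [Sy|nSy] := pselect (supp P Y y).
    by exists set0; split => //= w [].
  exists [set w | Y w = y]; split => //; last by move=> w [].
  by apply/eqP; rewrite eq_le measure_ge0 andbT leNgt; apply/negP.
by rewrite -[Y @^-1` _]setCK probability_setC ?null ?sube0//; exact: measurableC.
Qed.

End discrete_variable.

Section expected_tv.
Context {R : realType} {d dX dZ : measure_display} {Omega : measurableType d}
  {TX : measurableType dX} {TZ : measurableType dZ} (P : probability Omega R)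
  (X : Omega -> TX) (Y : Omega -> nat) (Z : Omega -> TZ)
  (f : TX * TZ -> nat -> R) (g : TZ -> nat -> R).
Hypotheses (mX : measurable_fun setT X) (mZ : measurable_fun setT Z)
  (mY : forall y, measurable [set w | Y w = y])
  (cf : cond_pmf P Y (fun w => (X w, Z w)) f) (cg : cond_pmf P Y Z g).

Let mXZ : measurable_fun setT (fun w => (X w, Z w)).
Proof. exact: measurable_fun_pair. Qed.

Let bf y : bounded_mfun (fun w => f (X w, Z w) y).
Proof. exact: cond_pmf_bounded mXZ cf y. Qed.

Let bg y : bounded_mfun (fun w => g (Z w) y).
Proof. exact: cond_pmf_bounded mZ cg y. Qed.

Lemma integral_cond_pmf_snd y (B : set TZ) : measurable B ->
  (\int[P]_(w in Z @^-1` B) (f (X w, Z w) y)%:E =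
   \int[P]_(w in Z @^-1` B) (g (Z w) y)%:E)%E.
Proof.
move=> mB; rewrite -cg.2.2//.
have -> : Z @^-1` B = (fun w => (X w, Z w)) @^-1` (setT `*` B).
  by apply/seteqP; split => w /=; [move=> Bw; split | case].
by rewrite -cf.2.2//; exact: measurableX.
Qed.

Lemma expect_cond_pmf_overlap y :
  \int[P]_w (f (X w, Z w) y * g (Z w) y) = \int[P]_w (g (Z w) y * g (Z w) y).
Proof.
rewrite /Rintegral; congr fine; under eq_integral do rewrite EFinM muleC.
under [RHS]eq_integral do rewrite EFinM.
apply: (eq_integral_comp_mul mZ (u := fun w => f (X w, Z w) y)
  (v := fun w => g (Z w) y) (phi := g^~ y)).
- by move=> w; exact: cond_pmf_ge0 cf _ _.
- by move=> w; exact: cond_pmf_ge0 cg _ _.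
- exact: (bf y).1.
- exact: (bg y).1.
- by move=> t; exact: cond_pmf_ge0 cg _ _.
- exact: cg.2.1.
- by move=> B mB; exact: integral_cond_pmf_snd.
Qed.

Lemma measurable_tv_cond :
  measurable_fun setT (fun w => tv (f (X w, Z w)) (g (Z w))).
Proof. by apply: measurable_tv => y; [exact: (bf y).1 | exact: (bg y).1]. Qed.

Lemma integral_tv_le (F : {fset nat}) :
  (\int[P]_w tv (f (X w, Z w)) (g (Z w)) <=
   (1 - \sum_(y <- F) \int[P]_w (g (Z w) y * g (Z w) y))%:E)%E.
Proof.
pose o w := \sum_(y <- F) f (X w, Z w) y * g (Z w) y.
have bo : bounded_mfun o by apply: bounded_mfun_sum => y; exact: bounded_mfunM.
have b1o : bounded_mfun (fun w => 1 - o w) by exact/bounded_mfunB/bo/bounded_mfun_cst.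
apply: (@le_trans _ _ (\int[P]_w (1 - o w)%:E)%E).
  apply: ge0_le_integral => //.
  - by move=> w _; exact: tv_ge0.
  - exact: measurable_tv_cond.
  - exact/measurable_EFinP/b1o.1.
  - by move=> w _; exact: tv_le_1_sub_overlap (cf.1 _) (cg.1 _).
rewrite integral_bounded_mfun// lee_fin RintegralB//; last 2 first.
- exact/bounded_mfun_integrable/bounded_mfun_cst.
- exact: bounded_mfun_integrable.
rewrite expect_cst expect_sum => [|y]; last exact: bounded_mfunM.
by under eq_bigr do rewrite expect_cond_pmf_overlap.
Qed.

Lemma integral_tv_le_card (S : set nat) : finite_set S -> P (Y @^-1` S) = 1%E ->
  (\int[P]_w tv (f (X w, Z w)) (g (Z w)) <=
   (1 - (#|` fset_set S |%fset%:R)^-1)%:E)%E.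
Proof.
move=> fS PS; set n : R := #|` fset_set S |%fset%:R.
apply: le_trans (integral_tv_le (fset_set S)) _; rewrite lee_fin lerB//.
have sqr_ge y : 2 * n^-1 * fine (P [set w | Y w = y]) - n^-1 ^+ 2 <=
    \int[P]_w (g (Z w) y * g (Z w) y).
  by rewrite -(expect_cond_pmf mZ cg); exact: expect_sqr_ge.
apply: le_trans (ler_sum _ (fun y _ => sqr_ge y)).
rewrite sumrB -mulr_sumr sum_prob_fibers// mulr1.
rewrite big_const_seq count_predT iter_addr addr0.
have [->|n_neq0] := eqVneq n 0.
  by rewrite invr0 mulr0 expr2 mul0r mul0rn subrr.
by rewrite (_ : _ - _ = n^-1)//; field.
Qed.

Lemma integral_tv_le_inv_etv_factor :
  (\int[P]_w tv (f (X w, Z w)) (g (Z w)) <= ((etv_factor (supp P Y))^-1)%:E)%E.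
Proof.
rewrite /etv_factor; destruct pselect as [fS|nfS]; rewrite ?invrK ?invr1.
  by apply: integral_tv_le_card => //; exact: prob_supp.
by have := integral_tv_le fset0; rewrite big_seq_fset0 subr0.
Qed.

Lemma ETV_ge0 : (0 <= ETV P X Y Z f g)%E.
Proof.
apply: mule_ge0; first by rewrite lee_fin etv_factor_ge0.
by apply: integral_ge0 => w _; exact: tv_ge0.
Qed.

Lemma ETV_le1 : (ETV P X Y Z f g <= 1)%E.
Proof.
have := integral_tv_le_inv_etv_factor; rewrite /ETV.
have := etv_factor_ge0 (supp P Y); set c := etv_factor _ => c_ge0 int_le.
have [->|c_neq0] := eqVneq c 0; first by rewrite mul0e.
apply: le_trans (lee_wpmul2l _ int_le) _; first exact: c_ge0.
by rewrite -EFinM mulfV.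
Qed.

Lemma integrable_tv_cond :
  P.-integrable setT (fun w => tv (f (X w, Z w)) (g (Z w))).
Proof.
apply/integrableP; split; first exact: measurable_tv_cond.
under eq_integral do rewrite gee0_abs ?tv_ge0//.
have := integral_tv_le fset0; rewrite big_seq_fset0 subr0 => int_le1.
by rewrite (le_lt_trans int_le1)// ltry.
Qed.

Variables (Ycal : set nat) (h : TX * TZ -> nat).
Hypotheses (fin_Ycal : finite_set Ycal)
  (Ycal_gt1 : (1 < #|` fset_set Ycal |%fset)%N) (PYcal : P (Y @^-1` Ycal) = 1%E)
  (mh : measurable_fun setT h) (Yh : forall w, Y w = h (X w, Z w))
  (g_unif : forall y, Ycal y ->
     {ae P, forall w, g (Z w) y = (#|` fset_set Ycal |%fset%:R)^-1}).
Let N : R := #|` fset_set Ycal |%fset%:R.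

Let N_gt0 : 0 < N. Proof. by rewrite ltr0n (ltn_trans _ Ycal_gt1). Qed.

Lemma supp_uniform : supp P Y = Ycal.
Proof.
apply/seteqP; split => y /= Sy.
  apply: contrapT => nYy; move: Sy; rewrite /supp /=.
  by rewrite (prob_fiber_outside mY PYcal nYy) ltxx.
rewrite /supp /= -(integral_cond_pmf cg) integral_bounded_mfun//.
rewrite (expect_ae_eq (bg y) (bounded_mfun_cst N^-1) (g_unif Sy)) expect_cst.
by rewrite lte_fin invr_gt0 N_gt0.
Qed.

Lemma expect_tv_witness y : Ycal y ->
  \int[P]_w ((f (X w, Z w) y - g (Z w) y) * (2 * \1_[set w | Y w = y] w - 1)) =
  2 * (1 - N^-1) * fine (P [set w | Y w = y]).
Proof.
move=> Yy; have fI := expect_cond_pmf_fiber cf y mh Yh.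
set I := \1_[set w | Y w = y] in fI *.
have bI : bounded_mfun I := bounded_mfun_indic (mY y).
have bfI := bounded_mfunM (bf y) bI; have bgI := bounded_mfunM (bg y) bI.
have int := @bounded_mfun_integrable _ _ _ P.
have gI : \int[P]_w (g (Z w) y * I w) = N^-1 * fine (P [set w | Y w = y]).
  rewrite (expect_ae_eq bgI (bounded_mfunM (bounded_mfun_cst N^-1) bI)).
    by rewrite RintegralZl ?expect_indic//; exact: int.
  by apply: filterS (g_unif Yy) => w ->.
transitivity (\int[P]_w
    (2 * (f (X w, Z w) y * I w - g (Z w) y * I w) - (f (X w, Z w) y - g (Z w) y))).
  by apply: eq_Rintegral => w _; ring.
rewrite RintegralB//; last 2 first.
- exact/int/bounded_mfunM/bounded_mfunB/bgI/bfI/bounded_mfun_cst.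
- exact/int/bounded_mfunB/bg/bf.
rewrite RintegralZl//; last exact/int/bounded_mfunB.
rewrite !RintegralB//; try exact: int.
by rewrite fI gI !(expect_cond_pmf mZ cg, expect_cond_pmf mXZ cf); ring.
Qed.

Lemma integral_tv_ge : ((1 - N^-1)%:E <= \int[P]_w tv (f (X w, Z w)) (g (Z w)))%E.
Proof.
pose c y w : R := 2 * \1_[set w | Y w = y] w - 1.
pose L w := 2^-1 * \sum_(y <- fset_set Ycal) (f (X w, Z w) y - g (Z w) y) * c y w.
have bc y : bounded_mfun (c y).
  apply: bounded_mfunB; last exact: bounded_mfun_cst.
  by apply: bounded_mfunM; [exact: bounded_mfun_cst | exact: bounded_mfun_indic].
have bterm y : bounded_mfun (fun w => (f (X w, Z w) y - g (Z w) y) * c y w).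
  exact/bounded_mfunM/bc/bounded_mfunB.
have bL : bounded_mfun L.
  exact/bounded_mfunM/bounded_mfun_sum/bterm/bounded_mfun_cst.
apply: (@le_trans _ _ (\int[P]_w (L w)%:E)%E).
  rewrite integral_bounded_mfun// lee_fin RintegralZl//; last first.
    exact/bounded_mfun_integrable/bounded_mfun_sum.
  rewrite expect_sum// big_seq.
  rewrite (eq_bigr (fun y => 2 * (1 - N^-1) * fine (P [set w | Y w = y]))); last first.
    by move=> y; rewrite in_fset_set// inE => /expect_tv_witness.
  by rewrite -big_seq -mulr_sumr sum_prob_fibers// mulr1 mulrA mulVf// mul1r.
apply: le_integral => //; first exact: bounded_mfun_integrable.
  exact: integrable_tv_cond.
move=> w _; apply: tv_ge_test_fun => y.
rewrite /c indicE; case: (_ \in _); rewrite ?mulr0 ?sub0r ?normrN ?normr1//.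
by rewrite mulr1 ger0_norm; lra.
Qed.

Lemma ETV_uniform : ETV P X Y Z f g = 1%E.
Proof.
have int_tv : (\int[P]_w tv (f (X w, Z w)) (g (Z w)))%E = (1 - N^-1)%:E.
  by apply/le_anti; rewrite integral_tv_ge integral_tv_le_card.
rewrite /ETV supp_uniform etv_factor_finite// int_tv -EFinM mulVf//.
by rewrite subr_eq0 eq_sym lt_eqF// (invf_lt1 N_gt0) ltr1n.
Qed.

End expected_tv.

Unset Implicit Arguments.
Set Strict Implicit.

Theorem lemma1 (R : realType) (d dX dZ : measure_display)
  (Omega : measurableType d) (TX : measurableType dX) (TZ : measurableType dZ)
  (P : probability Omega R)
  (X : Omega -> TX) (Y : Omega -> nat) (Z : Omega -> TZ)
  (Ycal : set nat) (f : TX * TZ -> nat -> R) (g : TZ -> nat -> R) :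
  measurable_fun setT X -> measurable_fun setT Z ->
  (forall y, measurable [set w | Y w = y]) ->
  countable Ycal -> P (Y @^-1` Ycal) = 1%E ->
  cond_pmf P Y (fun w => (X w, Z w)) f ->
  cond_pmf P Y Z g ->
  ((0 <= ETV P X Y Z f g)%E /\ (ETV P X Y Z f g <= 1)%E) /\
  (finite_set Ycal -> (1 < #|` fset_set Ycal |%fset)%N ->
   (exists h : TX * TZ -> nat, measurable_fun setT h /\
      forall w, Y w = h (X w, Z w)) ->
   (forall y, Ycal y ->
      {ae P, forall w, g (Z w) y = (#|` fset_set Ycal |%fset%:R)^-1}) ->
   ETV P X Y Z f g = 1%E).
Proof.
move=> mX mZ mY _ PY cf cg; split.
  by split; [exact: ETV_ge0 | exact: (ETV_le1 mX mZ mY cf cg)].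
move=> fin_Ycal Ycal_gt1 [h [mh Yh]] g_unif.
exact: (ETV_uniform mX mZ mY cf cg fin_Ycal Ycal_gt1 PY mh Yh g_unif).
Qed.
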